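(* For every integer $\Delta\geq 3$ there exists $\alpha>0$ such that there are infinitely many trees $X$ with maximum degree $\Delta$ with the following property: for every tree $T$ with maximum degree less than $\Delta$, every $T$-partition of $X$ has width at least $|V(X)|^{\alpha}$. Moreover, if $\Delta=3$, then for every $\alpha\in(0,1)$ there are infinitely many trees $X$ with maximum degree $3$ with this property.
   Context: For a graph $G$ and a tree $T$, a $T$-partition of $G$ is a family $(V_x : x\in V(T))$ of pairwise disjoint subsets of $V(G)$ (some possibly empty) with union $V(G)$, indexed by the nodes of $T$, such that for every edge $vw$ of $G$, if $v\in V_x$ and $w\in V_y$ then $x=y$ or $xy\in E(T)$. The width of a $T$-partition is $\max\{|V_x| : x\in V(T)\}$. *)

From mathcomp Require Import all_boot.
From Stdlib Require Import Reals.

Set Implicit Arguments.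
Unset Strict Implicit.
Unset Printing Implicit Defensive.

Definition simple_graph (V : finType) (e : rel V) : Prop :=
  symmetric e /\ irreflexive e.

Definition degree (V : finType) (e : rel V) (v : V) : nat :=
  #|[set w | e v w]|.

Definition acyclic (V : finType) (e : rel V) : Prop :=
  forall c : seq V, uniq c -> 3 <= size c -> ~~ cycle e c.

Definition connected_graph (V : finType) (e : rel V) : Prop :=
  forall x y : V, connect e x y.

Definition is_tree (V : finType) (e : rel V) : Prop :=
  [/\ simple_graph e, 0 < #|V|, connected_graph e & acyclic e].

Definition max_degree_eq (V : finType) (e : rel V) (d : nat) : Prop :=
  (forall v, degree e v <= d) /\ (exists v, degree e v = d).

Definition max_degree_lt (V : finType) (e : rel V) (d : nat) : Prop :=
  forall v, degree e v < d.

Definition is_Tpartition (X T : finType) (eX : rel X) (eT : rel T)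
    (P : T -> {set X}) : Prop :=
  [/\ (forall s t : T, s != t -> [disjoint P s & P t]),
      (forall v : X, exists t : T, v \in P t) &
      (forall (v w : X) (s t : T),
          eX v w -> v \in P s -> w \in P t -> s = t \/ eT s t)].

Definition width (X T : finType) (P : T -> {set X}) : nat :=
  \max_(t : T) #|P t|.

Definition wide_for (X : finType) (eX : rel X) (d : nat) (alpha : R) : Prop :=
  forall (T : finType) (eT : rel T),
    is_tree eT -> max_degree_lt eT d ->
    forall P : T -> {set X}, is_Tpartition eX eT P ->
      (Rpower (INR #|X|) alpha <= INR (width P))%R.

(* Take for X the d-ary heap on d ^ h vertices (maximum degree d + 1), and a
   T-partition of X with T of maximum degree at most d.  Since X-edges join
   equal or adjacent parts, a vertex at depth k lies in a part at distance at
   most k in T from the part of the root.  All d ^ h vertices thus lie in the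
   parts indexed by a ball of radius h in T, which has at most
   (h + 1) d (d - 1) ^ h nodes; hence some part has size at least about
   (d / (d - 1)) ^ h, a fixed positive power of |V(X)| = d ^ h.  For d = 2 the
   ball is a path, so the exponent can be taken arbitrarily close to 1. *)

From mathcomp Require Import all_boot.
From Stdlib Require Import Reals Lra.
(* Reals rebinds [^] on [nat] to [Nat.pow]; restore [expn]. *)
Import ssrnat.

Set Implicit Arguments.
Unset Strict Implicit.
Unset Printing Implicit Defensive.

Lemma leq_card_bigcup (T I : finType) (A : {pred I}) (F : I -> {set T}) :
  #|\bigcup_(i in A) F i| <= \sum_(i in A) #|F i|.
Proof.
elim/big_rec2: _ => [|i n S _ IH]; first by rewrite cards0.
exact: leq_trans (leq_card_setU _ _) (leq_add _ IH).
Qed.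

Section Balls.

Variables (T : finType) (e : rel T) (t0 : T).

Fixpoint ball (k : nat) : {set T} :=
  if k is k'.+1 then ball k' :|: [set u | [exists v in ball k', e v u]]
  else [set t0].

Definition layer (k : nat) : {set T} := ball k.+1 :\: ball k.

Lemma ballS k u :
  (u \in ball k.+1) = (u \in ball k) || [exists v in ball k, e v u].
Proof. by rewrite /= !inE. Qed.

Lemma ball_subS k : ball k \subset ball k.+1.
Proof. exact: subsetUl. Qed.

Lemma ball_adj k v u : v \in ball k -> e v u -> u \in ball k.+1.
Proof.
by move=> vk evu; rewrite ballS; apply/orP; right; apply/existsP; exists v; rewrite vk.
Qed.

Lemma layer_adj_ball k u : u \in layer k -> exists2 v, v \in ball k & e v u.
Proof.
by rewrite inE ballS => /andP[/negbTE-> /existsP[v /andP[]]]; exists v.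
Qed.

Lemma layerS_adj_layer k u : u \in layer k.+1 -> exists2 v, v \in layer k & e v u.
Proof.
move=> uL; have [v vB evu] := layer_adj_ball uL; exists v => //.
rewrite inE vB andbT; move: uL; rewrite inE => /andP[+ _].
by apply: contraNN => vk; apply: ball_adj vk evu.
Qed.

Hypotheses (esym : symmetric e) (d : nat) (deg_le : forall v, degree e v <= d).

(* Each vertex of a layer has a neighbour in the previous ball, so at most
   [d.-1] neighbours in the next layer. *)
Lemma card_layer_adj k v :
  v \in layer k -> #|[set u in layer k.+1 | e v u]| <= d.-1.
Proof.
move=> vL; have [w wB ewv] := layer_adj_ball vL.
have := deg_le v; rewrite /degree (cardsD1 w) inE esym ewv add1n => degv.
apply: leq_trans (_ : #|[set u | e v u] :\ w| <= _); last first.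
  by rewrite -ltnS (ltn_predK degv).
apply/subset_leq_card/subsetP=> u /setIdP[uL evu]; rewrite !inE evu andbT.
by apply: contraTneq uL => ->; rewrite inE (subsetP (ball_subS k) _ wB).
Qed.

Lemma card_layer k : #|layer k| <= d * d.-1 ^ k.
Proof.
elim: k => [|k IH].
  rewrite expn0 muln1; apply: leq_trans (deg_le t0).
  apply/subset_leq_card/subsetP=> u.
  by case/layer_adj_ball=> v /set1P-> ?; rewrite inE.
have cover : layer k.+1 \subset \bigcup_(v in layer k) [set u in layer k.+1 | e v u].
  apply/subsetP=> u uL; have [v vL evu] := layerS_adj_layer uL.
  by apply/bigcupP; exists v; rewrite // inE uL.
apply: leq_trans (subset_leq_card cover) _; apply: leq_trans (leq_card_bigcup _ _) _.
apply: leq_trans (_ : \sum_(v in layer k) d.-1 <= _).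
  by apply: leq_sum => v; apply: card_layer_adj.
by rewrite sum_nat_const expnS mulnCA [X in X <= _]mulnC leq_mul2l IH orbT.
Qed.

Lemma card_ball k : 1 < d -> #|ball k| <= k.+1 * d * d.-1 ^ k.
Proof.
move=> d_gt1; elim: k => [|k IH]; first by rewrite /= cards1 mul1n muln1 ltnW.
have split_ball : ball k.+1 \subset ball k :|: layer k.
  by apply/subsetP=> u uB; rewrite in_setU in_setD uB andbT orbN.
apply: leq_trans (subset_leq_card split_ball) _.
apply: leq_trans (leq_card_setU _ _) _.
apply: leq_trans (leq_add IH (card_layer k)) _.
rewrite -mulnA -mulSnr expnSr !mulnA leq_pmulr //.
by case: d d_gt1 => [|[]].
Qed.

End Balls.

Definition heap_parent (d j : nat) : nat := j.-1 %/ d.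

(* The [d]-ary tree on [n] vertices in heap numbering: [0] is the root and every
   [j > 0] is a child of [heap_parent d j]. *)
Definition heap_rel (d n : nat) : rel 'I_n := fun i j =>
  ((0 < j) && (heap_parent d j == i)) || ((0 < i) && (heap_parent d i == j)).
Arguments heap_rel d n : clear implicits.

Section HeapTree.

Variables (d n : nat).
Local Notation hrel := (heap_rel d n).

Lemma heap_parent_lt j : 0 < j -> heap_parent d j < j.
Proof. by case: j => // j _; rewrite ltnS leq_div. Qed.

Lemma heap_rel_sym : symmetric hrel.
Proof. by move=> i j; rewrite /heap_rel orbC. Qed.

Lemma heap_rel_irr : irreflexive hrel.
Proof.
move=> i; rewrite /heap_rel orbb; apply/negP=> /andP[i_gt0 /eqP pi].
by have := heap_parent_lt i_gt0; rewrite pi ltnn.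
Qed.

Lemma heap_rel_parent i j : hrel i j -> j < i -> heap_parent d i = j.
Proof.
case/orP=> [/andP[j_gt0 /eqP pj] ji|/andP[_ /eqP //]].
by have := ltn_trans (heap_parent_lt j_gt0) ji; rewrite pj ltnn.
Qed.

Lemma heap_connect_root (r : 'I_n) : r = 0 :> nat -> forall i, connect hrel i r.
Proof.
move=> r0 i; have [k] := ubnP i; elim: k i => // k IH i; rewrite ltnS => ik.
have [i0|i_gt0] := posnP i.
  by rewrite (_ : i = r) //; apply: val_inj; rewrite /= i0 r0.
have pn : heap_parent d i < n := ltn_trans (heap_parent_lt i_gt0) (ltn_ord i).
apply: connect_trans (connect1 _) (IH (Ordinal pn) _).
  by rewrite /heap_rel i_gt0 /= eqxx orbT.
exact: leq_trans (heap_parent_lt i_gt0) ik.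
Qed.

Lemma heap_connected : 0 < n -> connected_graph hrel.
Proof.
move=> n_gt0 x y; pose r := Ordinal n_gt0.
apply: connect_trans (heap_connect_root (r := r) erefl x) _.
by rewrite (sym_connect_sym heap_rel_sym); apply: heap_connect_root.
Qed.

(* The largest vertex of a cycle would have both of its cycle neighbours as
   parent. *)
Lemma heap_acyclic : acyclic hrel.
Proof.
move=> [//|x c] uc c_ge3; apply/negP=> cc.
have [m mc max_m] := @arg_maxnP _ x [pred y | y \in x :: c] val (mem_head _ _).
case: (rot_to mc) => k s ec.
have : uniq (m :: s) by rewrite -ec rot_uniq.
have : cycle hrel (m :: s) by rewrite -ec rot_cycle.
have : 2 < size (m :: s) by rewrite -ec size_rot.
have : (m :: s) =i x :: c by move=> y; rewrite -ec mem_rot.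
case: s {ec uc c_ge3 cc} => [|a [|b s]] //= mem_s _.
rewrite rcons_path => /and3P[ema _ /andP[_ ezm]] /and4P[m_notin a_notin _ _].
have lt_m y : y \in [:: a, b & s] -> y < m.
  move=> ys; have y_le_m : y <= m by apply: max_m; rewrite /= -mem_s inE ys orbT.
  rewrite ltn_neqAle y_le_m andbT val_eqE.
  by apply: contraNneq m_notin => <-.
rewrite heap_rel_sym in ezm.
have zs : last b s \in [:: a, b & s] by rewrite inE mem_last orbT.
have az : a = last b s.
  apply: val_inj; rewrite /= -(heap_rel_parent ema (lt_m a (mem_head _ _))).
  exact: heap_rel_parent ezm (lt_m _ zs).
by move: a_notin; rewrite az mem_last.
Qed.

Hypothesis d_gt0 : 0 < d.

(* A neighbour of [i] is either its parent, coded [None], or a child [j],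
   coded by its rank [j.-1 %% d] among its siblings. *)
Definition heap_nbr_code (i j : 'I_n) : option 'I_d :=
  if (0 < j) && (heap_parent d j == i) then Some (Ordinal (ltn_pmod j.-1 d_gt0))
  else None.

Lemma heap_nbr_code_inj i : {in [set j | hrel i j] &, injective (heap_nbr_code i)}.
Proof.
move=> j k; rewrite !inE /heap_nbr_code /heap_rel.
case: ifP => [/andP[j_gt0 /eqP pj] _|_ /= /andP[_ /eqP pi]].
  case: ifP => [/andP[k_gt0 /eqP pk] _ [] eq_mod|//].
  apply: val_inj; rewrite /= -(prednK j_gt0) -(prednK k_gt0); congr _.+1.
  by rewrite (divn_eq j.-1 d) (divn_eq k.-1 d) -!/(heap_parent d _) pj pk eq_mod.
case: ifP => [//|_] /= /andP[_ /eqP pi'] _.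
by apply: val_inj; rewrite /= -pi -pi'.
Qed.

Lemma heap_degree_le i : degree hrel i <= d.+1.
Proof.
have := @leq_card_in _ _ _ _ (@heap_nbr_code_inj i).
by rewrite card_option card_ord.
Qed.

Lemma heap_degree_one (one : 'I_n) : d.*2 < n -> one = 1 :> nat ->
  degree hrel one = d.+1.
Proof.
move=> big one1; apply/eqP; rewrite eqn_leq heap_degree_le /degree /=.
apply: leq_trans (leq_imset_card (heap_nbr_code one) _).
have <- : #|[set: option 'I_d]| = d.+1 by rewrite cardsT card_option card_ord.
apply/subset_leq_card/subsetP.
have child_parent (k : 'I_d) : heap_parent d (d + k).+1 = 1.
  by rewrite /heap_parent /= divnDl ?dvdnn // divnn d_gt0 divn_small.
case=> [k|] _.
  have jn : (d + k).+1 < n.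
    by apply: leq_ltn_trans big; rewrite -addnn ltn_add2l.
  apply/imsetP; exists (Ordinal jn).
    by rewrite inE /heap_rel one1 child_parent.
  rewrite /heap_nbr_code /= child_parent one1 /=; congr Some; apply: val_inj.
  by rewrite /= modnDl modn_small.
have n_gt0 : 0 < n by apply: leq_trans big.
apply/imsetP; exists (Ordinal n_gt0).
  by rewrite inE /heap_rel /= one1 /heap_parent div0n.
by rewrite /heap_nbr_code.
Qed.

End HeapTree.

Lemma heap_tree d n : 0 < n -> is_tree (heap_rel d n).
Proof.
move=> n_gt0; split; last exact: heap_acyclic.
- by split; [exact: heap_rel_sym | exact: heap_rel_irr].
- by rewrite card_ord.
- exact: heap_connected.
Qed.

Lemma heap_max_degree d n : 0 < d -> d.*2 < n -> max_degree_eq (heap_rel d n) d.+1.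
Proof.
move=> d_gt0 big; split=> [i|]; first exact: heap_degree_le.
have one_lt : 1 < n by apply: leq_ltn_trans big; rewrite -addnn ltn_addr.
by exists (Ordinal one_lt); apply: heap_degree_one.
Qed.

Section TPartition.

Variables (X T : finType) (eX : rel X) (eT : rel T) (P : T -> {set X}).
Hypothesis tpart : is_Tpartition eX eT P.

Lemma Tpartition_part_uniq v s t : v \in P s -> v \in P t -> s = t.
Proof.
case: tpart => disj _ _ vs vt; apply: contraTeq isT => /disj.
by rewrite disjoint_subset => /subsetP/(_ v vs); rewrite inE vt.
Qed.

Lemma card_le_width (B : {set T}) :
  (forall v t, v \in P t -> t \in B) -> #|X| <= #|B| * width P.
Proof.
case: tpart => _ cover _ inB.
have cover_B : [set: X] \subset \bigcup_(t in B) P t.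
  apply/subsetP=> v _; have [t vt] := cover v.
  by apply/bigcupP; exists t; first exact: inB vt.
rewrite -cardsT; apply: leq_trans (subset_leq_card cover_B) _.
apply: leq_trans (leq_card_bigcup _ _) _.
rewrite -sum_nat_const; apply: leq_sum => t _.
by rewrite /width; apply: (@leq_bigmax _ (fun t => #|P t|)).
Qed.

End TPartition.

(* The vertices [i < d ^ k] are those of depth at most [k]. *)
Lemma heap_part_in_ball d n (T : finType) (eT : rel T) (P : T -> {set 'I_n})
    (r : 'I_n) t0 :
  0 < d -> r = 0 :> nat -> is_Tpartition (heap_rel d n) eT P -> r \in P t0 ->
  forall k (i : 'I_n) t, i < d ^ k -> i \in P t -> t \in ball eT t0 k.
Proof.
move=> d_gt0 r0 tpart rt0; have [_ cover edge] := tpart.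
have root_part (i : 'I_n) t : i = 0 :> nat -> i \in P t -> t = t0.
  move=> i0; rewrite (_ : i = r); last by apply: val_inj; rewrite /= i0 r0.
  by move/(Tpartition_part_uniq tpart)/(_ rt0).
elim=> [|k IH] i t ik it.
  by rewrite (root_part i t _ it) ?inE //; move: ik; rewrite expn0 ltnS leqn0 => /eqP.
have [i0|i_gt0] := posnP i.
  rewrite (root_part i t i0 it); apply: (subsetP (ball_subS _ _ _)).
  by apply: IH rt0; rewrite r0 expn_gt0 d_gt0.
have pn : heap_parent d i < n := ltn_trans (heap_parent_lt d i_gt0) (ltn_ord i).
have [s ps] := cover (Ordinal pn).
have sB : s \in ball eT t0 k.
  apply: IH ps; rewrite /= /heap_parent ltn_divLR // -expnSr.
  exact: leq_ltn_trans (leq_pred _) ik.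
have := edge _ _ _ _ _ ps it; rewrite /heap_rel /= i_gt0 eqxx /=.
case=> // [<-|est].
  exact: (subsetP (ball_subS _ _ _)).
exact: ball_adj sB est.
Qed.

Lemma heap_width_lower_bound d h (T : finType) (eT : rel T)
    (P : T -> {set 'I_(d ^ h)}) :
  1 < d -> symmetric eT -> (forall t, degree eT t <= d) ->
  is_Tpartition (heap_rel d (d ^ h)) eT P ->
  d ^ h <= h.+1 * d * d.-1 ^ h * width P.
Proof.
move=> d_gt1 eT_sym eT_deg tpart; have d_gt0 := ltnW d_gt1.
have n_gt0 : 0 < d ^ h by rewrite expn_gt0 d_gt0.
have [t0 rt0] : exists t0, Ordinal n_gt0 \in P t0 by case: tpart.
rewrite -{1}(card_ord (d ^ h)).
apply: leq_trans (@card_le_width _ _ _ _ _ tpart (ball eT t0 h) _) _.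
  move=> i t; apply: (heap_part_in_ball (r := Ordinal n_gt0)) rt0 _ _ _ (ltn_ord i) => //.
by rewrite leq_mul2r card_ball ?orbT.
Qed.

Lemma INR_muln m n : INR (m * n) = (INR m * INR n)%R.
Proof. by rewrite -multE mult_INR. Qed.

Lemma INR_expn m n : INR (m ^ n) = (INR m ^ n)%R.
Proof. by elim: n => [|n IH] //; rewrite expnS INR_muln IH. Qed.

Lemma INR_predn n : (0 < n)%N -> INR n.-1 = (INR n - 1)%R.
Proof. by move=> n_gt0; rewrite -{2}(prednK n_gt0) S_INR; lra. Qed.

Section RealBounds.

Local Open Scope R_scope.

Lemma Rpower_le_of_mul_le (n c w a : R) :
  0 < n -> 0 <= w -> n <= c * w -> c <= Rpower n (1 - a) -> Rpower n a <= w.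
Proof.
move=> n_gt0 w_ge0 n_le c_le.
have n_split : n = Rpower n a * Rpower n (1 - a).
  by rewrite -Rpower_plus Rplus_minus Rpower_1.
have pa := exp_pos (a * ln n); have pb := exp_pos ((1 - a) * ln n).
rewrite /Rpower in n_split pa pb c_le *.
have := Rmult_le_compat_r w _ _ w_ge0 c_le; nra.
Qed.

(* [exp (b x) >= (1 + b x / 2) ^ 2 >= b ^ 2 x ^ 2 / 4]. *)
Lemma affine_le_exp (b c x : R) :
  0 < b -> 0 <= c -> 1 <= x -> 8 * c <= b * b * x -> (x + 1) * c <= exp (b * x).
Proof.
move=> b_gt0 c_ge0 x_ge1 x_large.
have -> : b * x = b * x / 2 + b * x / 2 by field.
rewrite exp_plus; have e_ge := exp_ineq1_le (b * x / 2).
have y_ge0 : 0 <= b * x / 2 by nra.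
have : (1 + b * x / 2) * (1 + b * x / 2) <= exp (b * x / 2) * exp (b * x / 2).
  by apply: Rmult_le_compat; lra.
have := Rmult_le_compat_r x _ _ (Rle_trans _ _ _ Rle_0_1 x_ge1) x_large.
nra.
Qed.

Lemma heap_ball_le_pow (d : nat) (a : R) :
  (1 < d)%N -> ln (INR d - 1) < (1 - a) * ln (INR d) ->
  forall N, exists2 h, (N <= h)%N &
    INR (h.+1 * d * d.-1 ^ h) <= Rpower (INR (d ^ h)) (1 - a).
Proof.
move=> d_gt1 ln_lt N; set D := INR d in ln_lt *.
have D_ge2 : 2 <= D by apply: (le_INR 2); apply/leP.
set b := (1 - a) * ln D - ln (D - 1).
have b_gt0 : 0 < b by apply/Rlt_0_minus.
have [M M_large] := INR_unbounded (8 * D / (b * b)).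
exists (N + M).+1; first by rewrite ltnW // ltnS leq_addr.
set h := (N + M).+1; set H := INR h.
have H_ge1 : 1 <= H by apply: (le_INR 1); apply/leP.
have H_large : 8 * D <= b * b * H.
  have M_le_H : INR M <= H by apply: le_INR; apply/leP; rewrite ltnW // ltnS leq_addl.
  have bb_gt0 : 0 < b * b by nra.
  have := Rmult_lt_compat_l _ _ _ bb_gt0 (Rlt_le_trans _ _ _ M_large M_le_H).
  have -> : b * b * (8 * D / (b * b)) = 8 * D by field; lra.
  lra.
have Dm1_gt0 : 0 < D - 1 by lra.
clearbody h.
rewrite !INR_muln !INR_expn (INR_predn (ltnW d_gt1)) S_INR -/H -/D.
rewrite /Rpower ln_pow; last lra.
have -> : (1 - a) * (H * ln D) = H * ln (D - 1) + b * H by rewrite /b; ring.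
rewrite exp_plus -[exp (H * ln (D - 1))]/(Rpower (D - 1) H) Rpower_pow //.
rewrite Rmult_comm; apply: Rmult_le_compat_l; first exact: pow_le (Rlt_le _ _ Dm1_gt0).
by apply: affine_le_exp; lra.
Qed.

Lemma wide_heap_trees (d : nat) (a : R) :
  (1 < d)%N -> ln (INR d - 1) < (1 - a) * ln (INR d) ->
  forall N, exists (X : finType) (eX : rel X),
    [/\ is_tree eX, max_degree_eq eX d.+1, (N <= #|X|)%N & wide_for eX d.+1 a].
Proof.
move=> d_gt1 ln_lt N; have d_gt0 := ltnW d_gt1.
have [h h_large bound] := heap_ball_le_pow d_gt1 ln_lt (maxn N 3).
have n_gt0 : (0 < d ^ h)%N by rewrite expn_gt0 d_gt0.
have d2_lt : (d.*2 < d ^ h)%N.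
  apply: leq_trans (_ : d ^ 3 <= _)%N.
    rewrite -muln2 expnS ltn_mul2l d_gt0 expnS expn1.
    exact: leq_trans (leq_mul d_gt1 d_gt1).
  by rewrite leq_pexp2l // (leq_trans (leq_maxr N 3)).
exists 'I_(d ^ h), (heap_rel d (d ^ h)); split.
- exact: heap_tree.
- exact: heap_max_degree.
- rewrite card_ord; apply: leq_trans (leq_trans (leq_maxl N 3) h_large) _.
  exact: ltnW (ltn_expl h d_gt1).
move=> T eT [[eT_sym _] _ _ _] eT_deg P tpart.
rewrite card_ord; apply: (Rpower_le_of_mul_le _ (pos_INR _) _ bound).
  by apply: lt_0_INR; apply/ltP.
by rewrite -INR_muln; apply: le_INR; apply/leP; apply: heap_width_lower_bound.
Qed.

Lemma wide_exponent_exists (d : nat) :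
  (1 < d)%N -> exists2 a, 0 < a & ln (INR d - 1) < (1 - a) * ln (INR d).
Proof.
move=> d_gt1; set D := INR d.
have D_ge2 : 2 <= D by apply: (le_INR 2); apply/leP.
have ln_lt : ln (D - 1) < ln D by apply: ln_increasing; lra.
have lnD_gt0 : 0 < ln D by rewrite -ln_1; apply: ln_increasing; lra.
exists ((ln D - ln (D - 1)) / (2 * ln D)).
  by apply: Rdiv_lt_0_compat; lra.
have -> : (1 - (ln D - ln (D - 1)) / (2 * ln D)) * ln D = (ln D + ln (D - 1)) / 2.
  by field; lra.
lra.
Qed.

End RealBounds.

Theorem proposition4 :
  (forall Delta : nat, 3 <= Delta ->
     exists alpha : R, (0 < alpha)%R /\
       forall N : nat, exists (X : finType) (eX : rel X),
         [/\ is_tree eX, max_degree_eq eX Delta, N <= #|X|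
           & wide_for eX Delta alpha])
  /\
  (forall alpha : R, (0 < alpha)%R -> (alpha < 1)%R ->
     forall N : nat, exists (X : finType) (eX : rel X),
       [/\ is_tree eX, max_degree_eq eX 3, N <= #|X|
         & wide_for eX 3 alpha]).
Proof.
split=> [Delta Delta_ge3 | a a_gt0 a_lt1].
  have d_gt1 : (1 < Delta.-1)%N by rewrite -ltnS (ltn_predK Delta_ge3).
  have [a a_gt0 ln_lt] := wide_exponent_exists d_gt1.
  by exists a; split=> //; rewrite -(ltn_predK Delta_ge3); apply: wide_heap_trees.
apply: (@wide_heap_trees 2) => //.
have -> : (INR 2 - 1 = 1)%R by rewrite /=; lra.
rewrite ln_1; apply: Rmult_lt_0_compat; first lra.
by rewrite -ln_1; apply: ln_increasing; rewrite /=; lra.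
Qed.
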